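(* Let $J$ and $K$ be finite sets, let $X=(X_j)_{j\in J}$ be a family of symmetric lists of elements of $K$, and let $k\in K$. Then \[\lVert\mathcal D_{J,K}(X)(k)\rVert=\sum_{j\in J}\mathfrak c\big(k,\lVert X_j\rVert\big)\cdot\{j\}.\]
   Context: $\mathrm{SList}(C)$ denotes the category of symmetric lists on a set $C$ (objects finite lists of elements of $C$, morphisms generated by adjacent swaps $\mathrm{sw}_{a,b,l}:a::b::l\to b::a::l$ and consing $x::_mf$, subject to functoriality, naturality, $\mathrm{sw}_{b,a,l}\mathrm{sw}_{a,b,l}=\mathrm{Id}$ and the hexagon relation). $\mathrm{I}_C:\mathrm{SList}(C)\to\mathrm{Core}(\mathrm{Fin}_{/C})$ is the equivalence sending a list $L$ to its index set $\{0,\dots,\mathrm{length}(L)-1\}$ with the map $i\mapsto L[i]$ (morphisms go to the corresponding bijections of index sets). $\mathrm{Fib}_C:\mathrm{Core}(\mathrm{Fin}_{/C})\to\mathrm{Core}(\mathrm{Fin})^C$ sends a set over $C$ to its family of fibers; it is an equivalence with inverse taking disjoint unions. The duality functor $\mathcal D_{J,K}:\mathrm{SList}(K)^J\to\mathrm{SList}(J)^K$ is the composite $\mathrm{SList}(K)^J\xrightarrow{\mathrm I_K}\mathrm{Core}(\mathrm{Fin}_{/K})^J\xrightarrow{\mathrm{Fib}_K}(\mathrm{Core}(\mathrm{Fin})^K)^J\cong(\mathrm{Core}(\mathrm{Fin})^J)^K\xrightarrow{\mathrm{Fib}_J^{-1}}\mathrm{Core}(\mathrm{Fin}_{/J})^K\xrightarrow{\mathrm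 I_J^{-1}}\mathrm{SList}(J)^K$ (middle map: swapping the two variables). $\lVert X\rVert$ is the underlying multiset of a symmetric list, $\mathfrak c(k,M)$ the multiplicity of $k$ in a multiset $M$, and $\{j\}$ the multiset with single element $j$ of multiplicity one. *)

From HB Require Import structures.
From mathcomp Require Import all_boot.
From mathcomp Require Export finmap multiset.
Set Implicit Arguments. Unset Strict Implicit. Unset Printing Implicit Defensive.

(* Objects of SList(C): finite lists of elements of C (only objects are needed
   here, since the statement only concerns the object part of D_{J,K}). *)
Definition SList (C : Type) := seq C.

(* Objects of Core(Fin_{/C}): a finite set together with a map to C. *)
Record FinOver (C : Type) := MkFinOver { fo_carrier : finType ; fo_map : fo_carrier -> C }.

Definition I_fun (C : Type) (L : SList C) : FinOver C :=
  @MkFinOver C 'I_(size L) (fun i => tnth (in_tuple L) i).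

(* I_C^{-1} (an inverse on objects): a finite set over C is sent to the list of
   the labels of its elements, enumerated in the canonical order of the finType. *)
Definition I_inv (C : Type) (A : FinOver C) : SList C :=
  [seq @fo_map C A x | x <- enum (fo_carrier A)].

Definition fiber (C : eqType) (A : FinOver C) (c : C) : finType :=
  {x : fo_carrier A | @fo_map C A x == c}.

Definition Fib_inv (C : finType) (F : C -> finType) : FinOver C :=
  @MkFinOver C {c : C & F c} (fun p => tag p).

Definition Duality (J K : finType) (X : J -> SList K) : K -> SList J :=
  fun k => I_inv (Fib_inv (fun j => fiber (I_fun (X j)) k)).

Definition underlying (C : choiceType) (L : SList C) : multiset C := seq_mset L.

Definition mult (C : choiceType) (k : C) (M : multiset C) : nat := M k.

From mathcomp Require Import all_boot.
From mathcomp Require Import finmap multiset.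

(* The multiplicity of j in D(X)(k) is the number of indices of D(X)(k) labelled
   j, i.e. the size of the fiber over j of the disjoint union of the fibers
   Fib(I(X j'))(k); that fiber is Fib(I(X j))(k) itself, whose size is the
   number of positions of k in X j, i.e. the multiplicity of k in X j. *)

Lemma count_I_inv (C : eqType) (A : FinOver C) (c : C) :
  count_mem c (I_inv A) = #|fiber A c|.
Proof.
rewrite count_map card_sig cardE -size_filter /enum_mem filter_predT.
by congr size; apply: eq_filter.
Qed.

Lemma I_funK (C : Type) (L : SList C) : I_inv (I_fun L) = L.
Proof. exact: map_tnth_enum (in_tuple L). Qed.

Lemma card_fiber_I_fun (C : eqType) (L : SList C) (c : C) :
  #|fiber (I_fun L) c| = count_mem c L.
Proof. by rewrite -count_I_inv I_funK. Qed.

Lemma card_fiber_Fib_inv (C : finType) (F : C -> finType) (c : C) :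
  #|fiber (Fib_inv F) c| = #|F c|.
Proof.
have Tagged_inj : injective (Tagged F : F c -> {c' : C & F c'}).
  by move=> x y /(congr1 (tagged_as (Tagged F x))); rewrite !tagged_asE.
rewrite card_sig -(card_codom Tagged_inj); apply: eq_card => p; rewrite !inE.
apply/idP/codomP => [|[x ->]] //=.
by case: p => c' x /= /eqP c'_eq_c; subst c'; exists x.
Qed.

Lemma big_msetnE (I : finType) (n : I -> nat) (i : I) :
  (\big[@msetD I / mset0]_(i' : I) msetn (n i') i') i = n i.
Proof.
rewrite (big_morph (fun A : multiset I => A i) (id1 := 0) (op1 := addn)); last 2 first.
- by move=> A B; rewrite msetE2.
- by rewrite mset0E.
rewrite (bigD1 i) //= msetnxx big1 ?addn0 // => i' /negbTE i'_neq_i.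
by rewrite msetnE eq_sym i'_neq_i.
Qed.

Theorem lemma4p9 (J K : finType) (X : J -> SList K) (k : K) :
  underlying (Duality X k)
  = \big[@msetD J / mset0]_(j : J) msetn (mult k (underlying (X j))) j.
Proof.
apply/msetP => j; rewrite big_msetnE /mult /underlying !mset_seqE.
by rewrite count_I_inv card_fiber_Fib_inv card_fiber_I_fun.
Qed.
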